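(* Consider the delayed online learning protocol of the context. Assume the maximum delay is bounded by $\tau$, i.e. $\{1,\dots,t-\tau-1\}\subset\mathcal S_t$ for all $t$, and that $\|g_t\|_*\le G$ for all $t$. Let DDA be run with learning rates $\eta_t=\dfrac{r}{G\sqrt{t(1+2\tau)}}$. Then for every $p\in\mathcal X$ with $h(p)\le r^2$, \[R_T(p)\le 2rG\sqrt{T(1+2\tau)}.\]
   Context: Let $\mathcal V$ be a finite-dimensional real vector space with norm $\|\cdot\|$ and dual norm $\|\cdot\|_*$, and $\mathcal X\subset\mathcal V$ closed convex. A regularizer $h:\mathcal V\to\mathbb R\cup\{+\infty\}$ is lower semicontinuous, $1$-strongly convex w.r.t. $\|\cdot\|$ on $\mathcal X$, with $\mathcal X\subset\operatorname{dom}h$, whose subdifferential admits a continuous selection, and $h\ge0$. Protocol: at each round $t=1,\dots,T$ one agent $i(t)$ is active, plays $x_t\in\mathcal X$, incurs $f_t(x_t)$ ($f_t$ convex, $\mathcal X\subset\operatorname{dom}\partial f_t$); a subgradient $g_t\in\partial f_t(x_t)$ is revealed later. $\mathcal S^i_t\subset\{1,\dots,t-1\}$: timestamps of subgradients available to agent $i$ at time $t$, nondecreasing in $t$; $\mathcal S_t=\mathcal S^{i(t)}_t$. DDA: $x_t=\arg\min_{x\in\mathcal X}\{\sum_{s\in\mathcal S_t}\langle g_s,x\rangle+h(x)/\eta_t\}$. Regret: $R_T(p)=\sum_{t=1}^T f_t(x_t)-\sum_{t=1}^T f_t(p)$. Here $r>0$ and $G>0$ are constants. *)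

From HB Require Import structures.
From mathcomp Require Import all_boot all_order all_algebra.
From mathcomp Require Import all_classical all_reals all_analysis.
Set Implicit Arguments. Unset Strict Implicit. Unset Printing Implicit Defensive.
Import Order.TTheory GRing.Theory Num.Theory.
Import numFieldNormedType.Exports.
Local Open Scope classical_set_scope.
Local Open Scope ring_scope.

(* The finite-dimensional real vector space V is modelled as 'rV[R]_n;
   its dual is identified with 'rV[R]_n through the canonical pairing. *)
Definition pairing (R : realType) (n : nat) (g x : 'rV[R]_n) : R :=
  \sum_(i < n) g 0 i * x 0 i.

Definition is_norm (R : realType) (n : nat) (nrm : 'rV[R]_n -> R) : Prop :=
  [/\ forall x, 0 <= nrm x,
      forall x, nrm x = 0 -> x = 0,
      forall (a : R) x, nrm (a *: x) = `|a| * nrm x &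
      forall x y, nrm (x + y) <= nrm x + nrm y].

Definition dual_norm (R : realType) (n : nat) (nrm : 'rV[R]_n -> R)
  (g : 'rV[R]_n) : R :=
  sup [set pairing g x | x in [set x | nrm x <= 1]].

Definition convex_set (R : realType) (n : nat) (X : set 'rV[R]_n) : Prop :=
  forall x y (l : R), X x -> X y -> 0 <= l <= 1 -> X (l *: x + (1 - l) *: y).

Definition convex_efun (R : realType) (n : nat) (f : 'rV[R]_n -> \bar R) : Prop :=
  forall x y : 'rV[R]_n, forall l : R, 0 <= l <= 1 ->
    (f (l *: x + (1 - l) *: y)%R <= l%:E * f x + (1 - l)%:E * f y)%E.

Definition strongly_convex_on (R : realType) (n : nat) (nrm : 'rV[R]_n -> R)
  (X : set 'rV[R]_n) (h : 'rV[R]_n -> \bar R) : Prop :=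
  forall x y : 'rV[R]_n, forall l : R, X x -> X y -> 0 <= l <= 1 ->
    (h (l *: x + (1 - l) *: y)%R <=
       l%:E * h x + (1 - l)%:E * h y - (l * (1 - l) / 2 * nrm (x - y) ^+ 2)%:E)%E.

Definition subgrad (R : realType) (n : nat) (f : 'rV[R]_n -> \bar R)
  (x g : 'rV[R]_n) : Prop :=
  f x \is a fin_num /\ forall y, (f x + (pairing g (y - x)%R)%:E <= f y)%E.

Definition dom_subdiff (R : realType) (n : nat) (f : 'rV[R]_n -> \bar R)
  : set 'rV[R]_n := [set x | exists g, subgrad f x g].

Definition dom (R : realType) (n : nat) (f : 'rV[R]_n -> \bar R)
  : set 'rV[R]_n := [set x | f x < +oo]%E.

From HB Require Import structures.
From mathcomp Require Import all_boot all_order all_algebra.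
From mathcomp Require Import all_classical all_reals all_analysis.
From mathcomp Require Import ring lra zify.
Import Order.TTheory GRing.Theory Num.Theory.
Import numFieldNormedType.Exports.
Local Open Scope classical_set_scope.
Local Open Scope ring_scope.
Set Implicit Arguments.
Unset Strict Implicit.

(* Write B_t = g_1 + ... + g_(t-1) and F_t z = <B_t, z> + beta_t h z with
   beta_t = 1 / eta_t.  The delayed iterate x_t minimizes F_t - <E_t, .>, where E_t,
   the sum of the at most tau subgradients still missing at time t, has dual norm
   at most tau G.  For every comparator z, some point w of the segment [x_t, z]
   satisfies F_t w + <g_t, x_t> <= F_t z + <g_t, z> + (G^2/2 + tau G^2) / beta_t:
   this follows from the strong convexity of F_t and the quadratic growth of
   F_t - <E_t, .> around its minimizer x_t.  Since beta_t is nondecreasing and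
   h >= 0, these inequalities chain from t = T down to t = 1 (a be-the-leader
   argument with a moving comparator), giving
   sum_t <g_t, x_t - p> <= beta_T h p + sum_t (1 + 2 tau) G^2 / (2 beta_t),
   and both terms are at most r G sqrt (T (1 + 2 tau)).  The subgradient
   inequality bounds the regret by this linearized regret. *)

Lemma mx_norm_entry_le (R : realType) m n (x : 'M[R]_(m, n)) i j : `|x i j| <= `|x|.
Proof.
rewrite [leRHS]/Num.norm /= mx_normrE.
by apply: (le_bigmax _ _ (i, j)).
Qed.

Section Norm.
Variables (R : realType) (n : nat) (nrm : 'rV[R]_n -> R).
Hypothesis nrmP : is_norm nrm.

Lemma nrm_ge0 x : 0 <= nrm x. Proof. by case: nrmP. Qed.
Lemma nrm_eq0 x : nrm x = 0 -> x = 0. Proof. by case: nrmP => _ + _ _; apply. Qed.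
Lemma nrmZ a x : nrm (a *: x) = `|a| * nrm x. Proof. by case: nrmP => _ _ + _; apply. Qed.
Lemma nrmD x y : nrm (x + y) <= nrm x + nrm y. Proof. by case: nrmP => _ _ _; apply. Qed.

Lemma nrm0 : nrm 0 = 0.
Proof. by rewrite -(scale0r (0 : 'rV[R]_n)) nrmZ normr0 mul0r. Qed.

Lemma nrmN x : nrm (- x) = nrm x.
Proof. by rewrite -scaleN1r nrmZ normrN normr1 mul1r. Qed.

Lemma nrmB x y : nrm (x - y) = nrm (y - x).
Proof. by rewrite -nrmN opprB. Qed.

Lemma nrm_gt0 x : x != 0 -> 0 < nrm x.
Proof. by move=> x0; rewrite lt_def nrm_ge0 andbT; apply: contra x0 => /eqP/nrm_eq0->. Qed.

Lemma nrm_sum I (r : seq I) (P : pred I) (F : I -> 'rV[R]_n) :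
  nrm (\sum_(i <- r | P i) F i) <= \sum_(i <- r | P i) nrm (F i).
Proof.
elim/big_rec2: _ => [|i y1 y2 _ IH]; first by rewrite nrm0.
by apply: le_trans (nrmD _ _) _; rewrite lerD2l.
Qed.

Lemma nrm_le_mx_norm : exists2 K, 0 < K & forall x, nrm x <= K * `|x|.
Proof.
exists (\sum_j nrm ('e_j : 'rV[R]_n) + 1) => [|x].
  by rewrite ltr_wpDl // sumr_ge0 // => j _; apply: nrm_ge0.
rewrite {1}(row_sum_delta x); apply: le_trans (nrm_sum _ _ _) _.
rewrite mulrDl mul1r mulr_suml ler_wpDr //; apply: ler_sum => j _.
by rewrite nrmZ mulrC ler_wpM2l ?nrm_ge0 ?mx_norm_entry_le.
Qed.

Lemma continuous_nrm : continuous nrm.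
Proof.
have [K K0 nrmK] := nrm_le_mx_norm.
move=> x; apply/(@cvgrPdist_lt _ _ _ (nbhs x)) => e e0; near=> y.
have Lip : `|nrm x - nrm y| <= nrm (x - y).
  have := nrmD (x - y) y; have := nrmD (y - x) x.
  rewrite !subrK ler_distl (nrmB y) => h1 h2.
  by apply/andP; split; lra.
apply: le_lt_trans Lip _; apply: le_lt_trans (nrmK _) _.
rewrite mulrC -ltr_pdivlMr //; near: y.
by apply: cvgr_dist_lt => //; rewrite divr_gt0.
Unshelve. all: by end_near.
Qed.

Lemma mx_norm_le_nrm : exists2 c, 0 < c & forall x, c * `|x| <= nrm x.
Proof.
pose S := [set x : 'rV[R]_n | `|x| = 1].
have normalize x : x != 0 -> S (`|x|^-1 *: x) by move=> x0; rewrite /S /= normfZV.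
have [[z Sz]|S0] := pselect (S !=set0); last first.
  exists 1 => // x; have [->|x0] := eqVneq x 0; first by rewrite normr0 mulr0 nrm_ge0.
  by exfalso; apply: S0; exists (`|x|^-1 *: x); apply: normalize.
have cS : compact S.
  apply: bounded_closed_compact; first by exists 1; split => // M M1 x /= ->; apply: ltW.
  have -> : S = (fun x : 'rV[R]_n => `|x|) @^-1` [set 1] by [].
  by apply: (proj1 (continuous_closedP _)); [apply: norm_continuous | apply: closed_eq].
have [c /set_mem Sc cmin] :=
  EVT_min_rV (ex_intro _ z Sz) cS (continuous_subspaceT continuous_nrm).
have c0 : c != 0 by apply: contra_eq_neq Sc => ->; rewrite normr0 eq_sym oner_neq0.
exists (nrm c) => [|x]; first exact: nrm_gt0.
have [->|x0] := eqVneq x 0; first by rewrite normr0 mulr0 nrm_ge0.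
have := cmin _ (mem_set (normalize x x0)).
by rewrite nrmZ normfV normr_id ler_pdivlMl ?normr_gt0 // mulrC.
Qed.

End Norm.

Section Pairing.
Variables (R : realType) (n : nat).
Implicit Types (g x y : 'rV[R]_n).

Lemma pairingD g x y : pairing g (x + y) = pairing g x + pairing g y.
Proof. by rewrite /pairing -big_split; apply: eq_bigr => i _; rewrite mxE mulrDr. Qed.

Lemma pairingZ g a x : pairing g (a *: x) = a * pairing g x.
Proof. by rewrite /pairing mulr_sumr; apply: eq_bigr => i _; rewrite mxE mulrCA. Qed.

Lemma pairing0 g : pairing g 0 = 0.
Proof. by rewrite -(scale0r (0 : 'rV[R]_n)) pairingZ mul0r. Qed.

Lemma pairingB g x y : pairing g (x - y) = pairing g x - pairing g y.
Proof. by rewrite pairingD -scaleN1r pairingZ mulN1r. Qed.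

Lemma pairingDl g h x : pairing (g + h) x = pairing g x + pairing h x.
Proof. by rewrite /pairing -big_split; apply: eq_bigr => i _; rewrite mxE mulrDl. Qed.

Lemma pairing_suml I (r : seq I) (P : pred I) (F : I -> 'rV[R]_n) x :
  pairing (\sum_(i <- r | P i) F i) x = \sum_(i <- r | P i) pairing (F i) x.
Proof.
elim/big_rec2: _ => [|i y1 y2 _ IH]; last by rewrite pairingDl IH.
by rewrite /pairing big1 // => i _; rewrite mxE mul0r.
Qed.

End Pairing.

Section DualNorm.
Variables (R : realType) (n : nat) (nrm : 'rV[R]_n -> R).
Hypothesis nrmP : is_norm nrm.

(* Without this, the [sup] defining [dual_norm] could be a junk value. *)
Lemma dual_norm_has_sup g : has_sup [set pairing g x | x in [set x | nrm x <= 1]].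
Proof.
have [c c0 cnrm] := mx_norm_le_nrm nrmP.
split; first by exists 0, 0; [rewrite /= nrm0 | apply: pairing0].
exists ((\sum_i `|g 0 i|) / c) => _ [x /= x1 <-].
apply: (@le_trans _ _ ((\sum_i `|g 0 i|) * `|x|)).
  rewrite /pairing mulr_suml; apply: ler_sum => i _.
  by apply: le_trans (ler_norm _) _; rewrite normrM ler_wpM2l ?mx_norm_entry_le.
rewrite ler_wpM2l ?sumr_ge0 // -[c^-1]mul1r ler_pdivlMr // mulrC.
exact: le_trans (cnrm x) x1.
Qed.

Lemma pairing_le_dual_norm g u : pairing g u <= dual_norm nrm g * nrm u.
Proof.
have [->|u0] := eqVneq u 0; first by rewrite pairing0 nrm0 // mulr0.
have nu0 := nrm_gt0 nrmP u0.
rewrite mulrC -ler_pdivrMl // -pairingZ.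
apply: sup_upper_bound; first exact: dual_norm_has_sup.
exists ((nrm u)^-1 *: u) => //=.
by rewrite (nrmZ nrmP) ger0_norm ?invr_ge0 ?(ltW nu0) // mulVf ?gt_eqF.
Qed.

End DualNorm.

Lemma ler_add_vanishing (R : realFieldType) (a b c : R) : 0 <= c ->
  (forall l, 0 < l <= 1 -> a <= b + l * c) -> a <= b.
Proof.
move=> c0 H; apply/ler_addgt0Pr => e e0.
have c1 : 0 < c + 1 by rewrite ltr_wpDl.
pose l := Num.min 1 (e / (c + 1)).
have l0 : 0 < l by rewrite lt_min ltr01 divr_gt0.
apply: le_trans (H l _) _; first by rewrite l0 ge_min lexx.
rewrite lerD2l -[leRHS](divfK (lt0r_neq0 c1)).
by apply: ler_pM; [apply: ltW | | rewrite ge_min lexx orbT | rewrite lerDl].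
Qed.

Lemma mixing_weight (R : realFieldType) (k e gam d : R) :
  0 < k -> 0 <= e -> 0 <= gam -> 0 <= d ->
  exists2 l, 0 <= l <= 1 &
    gam * d + (1 - l) * (e * d - k / 2 * d ^+ 2) - l * (1 - l) / 2 * k * d ^+ 2
      <= (gam ^+ 2 / 2 + gam * e) / k.
Proof.
move=> k0 e0 gam0 d0; have [kde|ekd] := lerP (k * d) e.
  exists 1; first by rewrite ler01 lexx.
  rewrite subrr !(mul0r, mulr0) addr0 subr0.
  have : gam * d <= gam * e / k by rewrite -mulrA ler_wpM2l // ler_pdivlMr // mulrC.
  have : 0 <= gam ^+ 2 / 2 / k by rewrite !divr_ge0 ?sqr_ge0 // ltW.
  have -> : (gam ^+ 2 / 2 + gam * e) / k = gam ^+ 2 / 2 / k + gam * e / k by rewrite mulrDl.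
  lra.
have d_neq0 : d != 0 by apply: contraTneq ekd => ->; rewrite mulr0 -leNgt.
have kd0 : 0 < k * d by apply: le_lt_trans ekd.
exists (e / (k * d)); first by rewrite divr_ge0 ?(ltW kd0) //= ler_pdivrMr // mul1r ltW.
rewrite -subr_ge0.
have -> : (gam ^+ 2 / 2 + gam * e) / k -
    (gam * d + (1 - e / (k * d)) * (e * d - k / 2 * d ^+ 2)
       - e / (k * d) * (1 - e / (k * d)) / 2 * k * d ^+ 2)
    = (k * d - e - gam) ^+ 2 / (2 * k).
  by field; rewrite d_neq0 gt_eqF.
by rewrite divr_ge0 ?sqr_ge0 // mulr_ge0 // ltW.
Qed.

Section StronglyConvex.
Variables (R : realType) (n : nat) (nrm : 'rV[R]_n -> R) (X : set 'rV[R]_n).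
Hypothesis nrmP : is_norm nrm.
Hypothesis convX : forall x y l, X x -> X y -> 0 <= l <= 1 -> X (l *: x + (1 - l) *: y).

Definition strongly_convexR (k : R) (F : 'rV[R]_n -> R) :=
  forall x y l, X x -> X y -> 0 <= l <= 1 ->
    F (l *: x + (1 - l) *: y)
      <= l * F x + (1 - l) * F y - l * (1 - l) / 2 * k * nrm (x - y) ^+ 2.

Lemma strongly_convexR_regularized (hr : 'rV[R]_n -> R) B beta :
  0 <= beta -> strongly_convexR 1 hr ->
  strongly_convexR beta (fun z => pairing B z + beta * hr z).
Proof.
move=> beta0 schr x y l Xx Xy l01; rewrite pairingD !pairingZ.
have := ler_wpM2l beta0 (schr x y l Xx Xy l01); lra.
Qed.

Lemma strongly_convexR_subl k F E :
  strongly_convexR k F -> strongly_convexR k (fun z => F z - pairing E z).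
Proof.
move=> scF x y l Xx Xy l01; rewrite pairingD !pairingZ.
have := scF x y l Xx Xy l01; lra.
Qed.

Lemma strongly_convexR_min_growth k F x0 z :
  0 <= k -> strongly_convexR k F -> X x0 -> X z -> (forall y, X y -> F x0 <= F y) ->
  F x0 + k / 2 * nrm (z - x0) ^+ 2 <= F z.
Proof.
move=> k0 scF Xx0 Xz x0min.
apply: (@ler_add_vanishing _ _ _ (k / 2 * nrm (z - x0) ^+ 2)) => [|l /andP[l0 l1]].
  by rewrite mulr_ge0 ?sqr_ge0 ?divr_ge0.
have l01 : 0 <= l <= 1 by rewrite ltW.
have := x0min _ (convX Xz Xx0 l01); have := scF z x0 l Xz Xx0 l01.
set D := nrm _ ^+ 2 => h1 h2.
rewrite -(ler_pM2l l0); lra.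
Qed.

(* Comparing with a point of the segment [z, x0] instead of a minimizer of F (which
   is not assumed to exist) loses nothing, thanks to the weight of mixing_weight. *)
Lemma strongly_convexR_perturbed_step k F E g x0 z e gam :
  0 < k -> 0 <= e -> 0 <= gam -> strongly_convexR k F -> X x0 -> X z ->
  (forall y, X y -> F x0 - pairing E x0 <= F y - pairing E y) ->
  (forall u, pairing E u <= e * nrm u) -> (forall u, pairing g u <= gam * nrm u) ->
  exists2 w, X w & F w + pairing g x0 <= F z + pairing g z + (gam ^+ 2 / 2 + gam * e) / k.
Proof.
move=> k0 e0 gam0 scF Xx0 Xz x0min bndE bndg.
have := strongly_convexR_min_growth (ltW k0) (strongly_convexR_subl E scF) Xx0 Xz x0min.
have := bndE (x0 - z); have := bndg (x0 - z); rewrite !pairingB (nrmB nrmP x0).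
set d := nrm (z - x0) => hg hE hgrowth.
have [l l01 hl] := mixing_weight k0 e0 gam0 (nrm_ge0 nrmP (z - x0) : 0 <= d).
exists (l *: z + (1 - l) *: x0); first exact: convX.
have := scF z x0 l Xz Xx0 l01; rewrite -/d => hw.
have : (1 - l) * F x0 <= (1 - l) * (F z + e * d - k / 2 * d ^+ 2).
  by apply: ler_wpM2l; [rewrite subr_ge0; case/andP: l01 | lra].
lra.
Qed.

End StronglyConvex.

Section BeTheLeader.
Variables (R : realType) (n : nat) (X : set 'rV[R]_n) (hr : 'rV[R]_n -> R).
Variables (beta c : nat -> R) (g x : nat -> 'rV[R]_n) (T : nat).
Hypothesis hr_ge0 : forall z, X z -> 0 <= hr z.
Hypothesis beta0_ge0 : 0 <= beta 0.
Hypothesis beta_nondecr : forall t, beta t <= beta t.+1.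
Hypothesis step : forall t, (1 <= t <= T)%N -> forall z, X z ->
  exists2 w, X w &
    pairing (\sum_(1 <= s < t) g s) w + beta t * hr w + pairing (g t) (x t)
      <= pairing (\sum_(1 <= s < t) g s) z + beta t * hr z + pairing (g t) z + c t.

Lemma be_the_leader p : X p ->
  \sum_(1 <= t < T.+1) pairing (g t) (x t)
    <= pairing (\sum_(1 <= t < T.+1) g t) p + beta T * hr p + \sum_(1 <= t < T.+1) c t.
Proof.
suff leader m : (m <= T)%N -> forall z, X z ->
    \sum_(1 <= t < m.+1) pairing (g t) (x t)
      <= pairing (\sum_(1 <= t < m.+1) g t) z + beta m * hr z + \sum_(1 <= t < m.+1) c t.
  exact: leader.
elim: m => [_ z Xz|m IH mT z Xz].
  by rewrite pairing_suml !big_geq // add0r addr0 mulr_ge0 ?hr_ge0.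
have [w Xw hw] := step (t := m.+1) mT Xz.
have := IH (ltnW mT) w Xw; have := ler_wpM2r (hr_ge0 Xw) (beta_nondecr m).
rewrite !(big_nat_recr m.+1) //= pairingDl; lra.
Qed.

End BeTheLeader.

Lemma sum_missing_le (R : realDomainType) (a : nat -> R) (P : pred nat) (t tau : nat) M :
  0 <= M -> (forall s, (1 <= s < t)%N -> a s <= M) ->
  (forall s, (1 <= s)%N -> (s + tau + 1 <= t)%N -> P s) ->
  \sum_(1 <= s < t | ~~ P s) a s <= tau%:R * M.
Proof.
case: t => [|t] M0 aM recentP; first by rewrite big_geq // mulr_ge0.
rewrite (@big_cat_nat _ _ _ (maxn 1 (t.+1 - tau))) /= ?leq_maxl //; last by lia.
rewrite big_nat_cond big1 ?add0r => [|s /andP[/andP[s1 s_old]]]; last first.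
  by rewrite recentP //; lia.
apply: (@le_trans _ _ (\sum_(maxn 1 (t.+1 - tau) <= s < t.+1) M)).
  rewrite big_mkcond /=; apply: ler_sum_nat => s /andP[s1 st].
  by case: ifP => // _; apply: aM; lia.
rewrite sumr_const_nat -[M *+ _]mulr_natl; apply: ler_wpM2r => //; rewrite ler_nat; lia.
Qed.

Lemma sum_inv_sqrt_le (R : realType) (T : nat) :
  \sum_(1 <= t < T.+1) (Num.sqrt (t%:R : R))^-1 <= 2 * Num.sqrt (T%:R : R).
Proof.
elim: T => [|T IH]; first by rewrite big_geq // sqrtr0 mulr0.
rewrite big_nat_recr //=.
set a := Num.sqrt (T.+1%:R : R); set b := Num.sqrt (T%:R : R) in IH *.
have a0 : 0 < a by rewrite sqrtr_gt0 ltr0Sn.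
have b0 : 0 <= b by apply: sqrtr_ge0.
have ab : a ^+ 2 = b ^+ 2 + 1 by rewrite !sqr_sqrtr // -natr1.
have : a^-1 <= 2 * (a - b) by rewrite -[a^-1]mul1r ler_pdivrMr //; nra.
lra.
Qed.

Section InverseLearningRate.
Variables (R : realType) (r G : R) (tau : nat).
Hypotheses (r0 : 0 < r) (G0 : 0 < G).

Definition inv_learning_rate (t : nat) : R := G * Num.sqrt (t%:R * (1 + 2 * tau%:R)) / r.

Let q0 : 0 < 1 + 2 * tau%:R :> R. Proof. by rewrite ltr_pwDl // mulr_ge0. Qed.

Lemma inv_learning_rateE t :
  (r / (G * Num.sqrt (t%:R * (1 + 2 * tau%:R))))^-1 = inv_learning_rate t.
Proof. exact: invf_div. Qed.

Lemma inv_learning_rate_ge0 t : 0 <= inv_learning_rate t.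
Proof. by rewrite divr_ge0 ?mulr_ge0 ?sqrtr_ge0 ?(ltW G0) ?(ltW r0). Qed.

Lemma inv_learning_rate_gt0 t : (1 <= t)%N -> 0 < inv_learning_rate t.
Proof. by move=> t1; rewrite divr_gt0 // mulr_gt0 // sqrtr_gt0 mulr_gt0 // ltr0n. Qed.

Lemma inv_learning_rate_nondecr t : inv_learning_rate t <= inv_learning_rate t.+1.
Proof.
rewrite ler_pM2r ?invr_gt0 // ler_pM2l // ler_sqrt; last by rewrite mulr_ge0 // ltW.
by rewrite ler_pM2r // ler_nat.
Qed.

Lemma inv_learning_rate_regret_bound T :
  inv_learning_rate T * r ^+ 2
  + \sum_(1 <= t < T.+1) (G ^+ 2 / 2 + G * (tau%:R * G)) / inv_learning_rate t
  <= 2 * r * G * Num.sqrt (T%:R * (1 + 2 * tau%:R)).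
Proof.
rewrite /inv_learning_rate; set q := 1 + 2 * tau%:R.
have sq0 : 0 < Num.sqrt q by rewrite sqrtr_gt0.
have tauE : tau%:R = (Num.sqrt q ^+ 2 - 1) / 2 by rewrite sqr_sqrtr ?ltW // /q; field.
rewrite (@eq_big_nat _ _ _ 1 T.+1 _ (fun t => r * G * Num.sqrt q / 2 * (Num.sqrt t%:R)^-1)).
  rewrite -mulr_sumr sqrtrM ?ler0n //; set c := r * G * Num.sqrt q / 2.
  have -> : G * (Num.sqrt T%:R * Num.sqrt q) / r * r ^+ 2 = c * (2 * Num.sqrt T%:R).
    by rewrite /c; field; rewrite gt_eqF.
  have -> : 2 * r * G * (Num.sqrt T%:R * Num.sqrt q)
      = c * (2 * Num.sqrt T%:R) + c * (2 * Num.sqrt T%:R) by rewrite /c; field.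
  by rewrite lerD2l ler_wpM2l ?sum_inv_sqrt_le // /c !mulr_ge0 ?ltW.
move=> t /andP[t1 _]; rewrite sqrtrM ?ler0n // tauE.
have st : 0 < Num.sqrt (t%:R : R) by rewrite sqrtr_gt0 ltr0n.
by field; rewrite !gt_eqF.
Qed.

End InverseLearningRate.

Section DelayedDDA.
Variables (R : realType) (n : nat) (nrm : 'rV[R]_n -> R) (X : set 'rV[R]_n).
Variables (hr : 'rV[R]_n -> R) (beta : nat -> R) (G : R) (tau T : nat).
Variables (Agent : Type) (ag : nat -> Agent) (S : Agent -> nat -> nat -> bool).
Variables (x g : nat -> 'rV[R]_n).
Hypothesis nrmP : is_norm nrm.
Hypothesis convX : forall x y l, X x -> X y -> 0 <= l <= 1 -> X (l *: x + (1 - l) *: y).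
Hypothesis hr_ge0 : forall z, X z -> 0 <= hr z.
Hypothesis schr : strongly_convexR nrm X 1 hr.
Hypothesis beta0_ge0 : 0 <= beta 0.
Hypothesis beta_gt0 : forall t, (1 <= t)%N -> 0 < beta t.
Hypothesis beta_nondecr : forall t, beta t <= beta t.+1.
Hypothesis G_ge0 : 0 <= G.
Hypothesis recent : forall t s, (1 <= t <= T)%N -> (1 <= s)%N -> (s + tau + 1 <= t)%N ->
  S (ag t) t s.
Hypothesis dda : forall t, (1 <= t <= T)%N ->
  X (x t) /\ forall y, X y ->
    \sum_(1 <= s < t | S (ag t) t s) pairing (g s) (x t) + beta t * hr (x t)
      <= \sum_(1 <= s < t | S (ag t) t s) pairing (g s) y + beta t * hr y.
Hypothesis dual_g : forall t, (1 <= t <= T)%N -> dual_norm nrm (g t) <= G.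

Let B t := \sum_(1 <= s < t) g s.
Let E t := \sum_(1 <= s < t | ~~ S (ag t) t s) g s.

Lemma subgrad_pairing_le t u : (1 <= t <= T)%N -> pairing (g t) u <= G * nrm u.
Proof.
move=> tT; apply: le_trans (pairing_le_dual_norm nrmP _ _) _.
by rewrite ler_wpM2r ?(nrm_ge0 nrmP) ?dual_g.
Qed.

Lemma missing_pairing_le t u : (1 <= t <= T)%N -> pairing (E t) u <= tau%:R * G * nrm u.
Proof.
move=> /andP[t1 tT]; rewrite pairing_suml -mulrA.
apply: sum_missing_le => [|s /andP[s1 st]|s s1 st].
- by rewrite mulr_ge0 ?(nrm_ge0 nrmP).
- by apply: subgrad_pairing_le; rewrite s1 /=; lia.
- by apply: recent => //; rewrite t1.
Qed.

Lemma delayed_dda_step t : (1 <= t <= T)%N -> forall z, X z ->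
  exists2 w, X w &
    pairing (B t) w + beta t * hr w + pairing (g t) (x t)
      <= pairing (B t) z + beta t * hr z + pairing (g t) z
         + (G ^+ 2 / 2 + G * (tau%:R * G)) / beta t.
Proof.
move=> tT z Xz; have [Xxt xt_min] := dda tT.
have availE y : \sum_(1 <= s < t | S (ag t) t s) pairing (g s) y
    = pairing (B t) y - pairing (E t) y.
  by rewrite /B /E !pairing_suml [\sum_(1 <= s < t) _](bigID (S (ag t) t)) /= addrK.
have beta_t0 : 0 < beta t by case/andP: tT => t1 _; apply: beta_gt0.
apply: (strongly_convexR_perturbed_step nrmP convX
  (F := fun w => pairing (B t) w + beta t * hr w) (E := E t)) => //.
- by rewrite mulr_ge0.
- exact: strongly_convexR_regularized (ltW beta_t0) schr.
- by move=> y Xy; have := xt_min y Xy; rewrite !availE; lra.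
- by move=> u; apply: missing_pairing_le.
- by move=> u; apply: subgrad_pairing_le.
Qed.

Lemma delayed_dda_linear_regret p : X p ->
  \sum_(1 <= t < T.+1) pairing (g t) (x t - p)
    <= beta T * hr p + \sum_(1 <= t < T.+1) (G ^+ 2 / 2 + G * (tau%:R * G)) / beta t.
Proof.
move=> Xp.
have leader := be_the_leader (c := fun t => (G ^+ 2 / 2 + G * (tau%:R * G)) / beta t)
  hr_ge0 beta0_ge0 beta_nondecr delayed_dda_step Xp.
under eq_bigr do rewrite pairingB.
rewrite sumrB -pairing_suml; lra.
Qed.

End DelayedDDA.

Lemma convex_set_comb (R : realType) n (X : set 'rV[R]_n) : convex_set X ->
  forall x y l, X x -> X y -> 0 <= l <= 1 -> X (l *: x + (1 - l) *: y).
Proof.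
move=> convX x y l Xx Xy /andP[l0 l1].
by have := convX x y (Itv01 l0 l1) (mem_set Xx) (mem_set Xy); rewrite inE.
Qed.

Lemma ge0_dom_fineK (R : realType) n (h : 'rV[R]_n -> \bar R) z :
  (0 <= h z)%E -> dom h z -> h z = (fine (h z))%:E.
Proof. by move=> hz0 hz; rewrite fineK // ge0_fin_numE. Qed.

Lemma strongly_convexR_fine (R : realType) n (nrm : 'rV[R]_n -> R) X h :
  (forall x y l, X x -> X y -> 0 <= l <= 1 -> X (l *: x + (1 - l) *: y)) ->
  (forall z, X z -> h z = (fine (h z))%:E) ->
  strongly_convex_on nrm X h -> strongly_convexR nrm X 1 (fine \o h).
Proof.
move=> convX hE sch y z l Xy Xz l01; rewrite mulr1 -lee_fin /=.
rewrite EFinB EFinD (EFinM l) (EFinM (1 - l)) -(hE _ Xy) -(hE _ Xz).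
by rewrite -(hE _ (convX _ _ _ Xy Xz l01)); apply: sch.
Qed.

Lemma subgrad_sub_le (R : realType) n (f : 'rV[R]_n -> \bar R) x g p :
  subgrad f x g -> (f x - f p <= (pairing g (x - p))%:E)%E.
Proof.
case; case: (f x) => // a _ /(_ p); rewrite !pairingB.
case: (f p) => [b||] /=; last by rewrite leeNy_eq.
  by rewrite -!EFinD !lee_fin; lra.
by rewrite addeNy leNye.
Qed.

Theorem proposition1 (R : realType) (n : nat) (nrm : 'rV[R]_n -> R)
  (X : set 'rV[R]_n) (h : 'rV[R]_n -> \bar R)
  (Agent : Type) (ag : nat -> Agent) (S : Agent -> nat -> nat -> bool)
  (f : nat -> 'rV[R]_n -> \bar R) (x g : nat -> 'rV[R]_n)
  (r G : R) (tau T : nat) (p : 'rV[R]_n) :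
  is_norm nrm ->
  closed X -> convex_set X ->
  (* regularizer *)
  lower_semicontinuous h ->
  strongly_convex_on nrm X h ->
  X `<=` dom h ->
  (exists s : 'rV[R]_n -> 'rV[R]_n,
      {within dom_subdiff h, continuous s} /\
      forall y, dom_subdiff h y -> subgrad h y (s y)) ->
  (forall y, (0 <= h y)%E) ->
  0 < r -> 0 < G ->
  (* losses *)
  (forall t, (1 <= t <= T)%N -> convex_efun (f t)) ->
  (forall t, (1 <= t <= T)%N -> X `<=` dom_subdiff (f t)) ->
  (* available timestamps: subsets of {1,...,t-1}, nondecreasing in t *)
  (forall a t s, S a t s -> (1 <= s < t)%N) ->
  (forall a t1 t2 s, (t1 <= t2)%N -> S a t1 s -> S a t2 s) ->
  (* bounded delay: {1,...,t-tau-1} is included in S_t *)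
  (forall t s, (1 <= t <= T)%N -> (1 <= s)%N -> (s + tau + 1 <= t)%N ->
     S (ag t) t s) ->
  (* DDA iterates with eta_t = r / (G sqrt (t (1 + 2 tau))) *)
  (forall t, (1 <= t <= T)%N ->
     X (x t) /\
     forall y, X y ->
       ((\sum_(1 <= s < t | S (ag t) t s) pairing (g s) (x t))%:E
          + ((r / (G * Num.sqrt (t%:R * (1 + 2 * tau%:R))))^-1)%:E * h (x t)
        <= (\sum_(1 <= s < t | S (ag t) t s) pairing (g s) y)%:E
          + ((r / (G * Num.sqrt (t%:R * (1 + 2 * tau%:R))))^-1)%:E * h y)%E) ->
  (* revealed subgradients, bounded in dual norm *)
  (forall t, (1 <= t <= T)%N -> subgrad (f t) (x t) (g t)) ->
  (forall t, (1 <= t <= T)%N -> dual_norm nrm (g t) <= G) ->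
  X p -> (h p <= (r ^+ 2)%:E)%E ->
  (\sum_(1 <= t < T.+1) (f t (x t) - f t p)
     <= (2 * r * G * Num.sqrt (T%:R * (1 + 2 * tau%:R)))%:E)%E.
Proof.
(* Closedness of X, lower semicontinuity of h, the subgradient selection, the
   convexity of the losses and the two structural hypotheses on S only ensure that
   the iterates and subgradients exist; the proof does not need them. *)
move=> nrmP _ /convex_set_comb convX _ sch Xdomh _ h_ge0 r0 G0 _ _ _ _
  recent dda subg dual_g Xp hp.
have hE z : X z -> h z = (fine (h z))%:E.
  by move=> Xz; apply: ge0_dom_fineK; [apply: h_ge0 | apply: Xdomh].
have dda_fin t : (1 <= t <= T)%N -> X (x t) /\ forall y, X y ->
    \sum_(1 <= s < t | S (ag t) t s) pairing (g s) (x t)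
      + inv_learning_rate r G tau t * fine (h (x t))
    <= \sum_(1 <= s < t | S (ag t) t s) pairing (g s) y
      + inv_learning_rate r G tau t * fine (h y).
  move=> tT; have [Xxt xt_min] := dda t tT; split => // y Xy.
  have := xt_min y Xy; rewrite inv_learning_rateE (hE _ Xxt) (hE _ Xy).
  by rewrite -!EFinM -!EFinD lee_fin.
have linear := delayed_dda_linear_regret nrmP convX (fun z Xz => fine_ge0 (h_ge0 z))
  (strongly_convexR_fine convX hE sch) (inv_learning_rate_ge0 tau r0 G0 0)
  (inv_learning_rate_gt0 tau r0 G0) (inv_learning_rate_nondecr tau r0 G0) (ltW G0)
  recent dda_fin dual_g Xp.
apply: (@le_trans _ _ (\sum_(1 <= t < T.+1) (pairing (g t) (x t - p))%:E)).
  rewrite big_nat_cond [in X in (_ <= X)%E]big_nat_cond.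
  apply: lee_sum => t /andP[/andP[t1 tT] _]; apply/subgrad_sub_le/subg.
  by rewrite t1 -ltnS.
rewrite sumEFin lee_fin; apply: le_trans linear _.
apply: le_trans (inv_learning_rate_regret_bound tau r0 G0 T).
rewrite lerD2r ler_wpM2l ?(inv_learning_rate_ge0 tau r0 G0) //.
by rewrite -lee_fin -hE.
Qed.
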